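(* Let $F$ be the cdf of a continuous nonnegative random variable with unbounded support $[0,\infty)$, density $f$ and reversed hazard rate $\tilde h=f/F$. Let $\sigma_1,\sigma_2\geq0$, $\lambda_1,\lambda_2>0$, $r_1,r_2\geq0$, and let $n_1,n_2,n_1^*,n_2^*$ be positive integers with $n_1r_1+n_2r_2=1$ and $n_1^*r_1+n_2^*r_2=1$; put $n=n_1+n_2$, $n^*=n_1^*+n_2^*$. Let $U_n$ and $U_{n^*}$ be random variables with cdfs $$F_{U_n}(x)=n_1r_1F\!\left(\tfrac{x-\sigma_1}{\lambda_1}\right)I(x>\sigma_1)+n_2r_2F\!\left(\tfrac{x-\sigma_2}{\lambda_2}\right)I(x>\sigma_2),$$ $$F_{U_{n^*}}(x)=n_1^*r_1F\!\left(\tfrac{x-\sigma_1}{\lambda_1}\right)I(x>\sigma_1)+n_2^*r_2F\!\left(\tfrac{x-\sigma_2}{\lambda_2}\right)I(x>\sigma_2).$$ Suppose either that $F$ is DPRFR and $(\lambda_1,\lambda_2),(\sigma_1,\sigma_2)\in\mathcal{D}_2^+$, or that $F$ is IRFR and $(\lambda_1,\lambda_2),(\sigma_1,\sigma_2)\in\mathcal{E}_2^+$. If $n_1n_2^*\geq n_1^*n_2$, then $U_n\geq_{rh}U_{n^*}$.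
   Context: $I(x>\sigma)$ is $1$ if $x>\sigma$ and $0$ otherwise. $\mathcal{D}_2^+=\{(u_1,u_2):u_1\geq u_2>0\}$, $\mathcal{E}_2^+=\{(u_1,u_2):0<u_1\leq u_2\}$. $F$ is DPRFR (decreasing proportional reversed failure rate) if $x\tilde h(x)$ is decreasing in $x>0$; $F$ is IRFR if $\tilde h(x)$ is increasing in $x>0$. $X\geq_{rh}Y$ means the reversed hazard rate of $X$ is at least that of $Y$ at every $x\geq0$ (equivalently $F_X(x)/F_Y(x)$ is increasing). *)

From Stdlib Require Import Reals.
From Coquelicot Require Import Coquelicot.
Open Scope R_scope.

Definition ind_gt (x s : R) : R := if Rlt_dec s x then 1 else 0.

(* F is the cdf of a continuous nonnegative random variable with support
   [0, +oo): continuous, nondecreasing, zero on (-oo,0], strictly increasing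
   on [0,+oo) (so every point of [0,oo) is in the support), tends to 1 at +oo. *)
Definition cont_nonneg_cdf_full_support (F : R -> R) : Prop :=
  (forall x, continuous F x) /\
  (forall x y, x <= y -> F x <= F y) /\
  (forall x, x <= 0 -> F x = 0) /\
  (forall x y, 0 <= x -> x < y -> F x < F y) /\
  is_lim F p_infty 1.

Definition is_density (F f : R -> R) : Prop :=
  (forall x, 0 <= f x) /\ (forall x, 0 < x -> is_derive F x (f x)).

Definition rev_hazard (F f : R -> R) (x : R) : R := f x / F x.

Definition DPRFR (F f : R -> R) : Prop :=
  forall x y, 0 < x -> x <= y -> y * rev_hazard F f y <= x * rev_hazard F f x.

Definition IRFR (F f : R -> R) : Prop :=
  forall x y, 0 < x -> x <= y -> rev_hazard F f x <= rev_hazard F f y.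

Definition D2plus (u1 u2 : R) : Prop := u1 >= u2 /\ u2 > 0.
Definition E2plus (u1 u2 : R) : Prop := 0 < u1 /\ u1 <= u2.

Definition mix_cdf (F : R -> R) (a1 a2 s1 s2 l1 l2 : R) (x : R) : R :=
  a1 * F ((x - s1) / l1) * ind_gt x s1 + a2 * F ((x - s2) / l2) * ind_gt x s2.

(* X >=_rh Y, in terms of cdfs: F_X(x)/F_Y(x) is increasing (nondecreasing)
   in x >= 0 (on the set where F_Y > 0, where the ratio is defined). *)
Definition rh_ge (FX FY : R -> R) : Prop :=
  forall x y, 0 <= x -> x <= y -> 0 < FY x -> FX x / FY x <= FX y / FY y.

From Stdlib Require Import Reals Lra.
From Coquelicot Require Import Coquelicot.
Open Scope R_scope.

(* Under DPRFR, with [u = (t - s) / l] the log-derivative of [F ((t - s) / l)]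
   is [u h(u) / (t - s)]; for [l1 >= l2] and [s1 >= s2] the first component has
   both the smaller [u] (hence, by DPRFR, the larger [u h(u)]) and the smaller
   [t - s], so its log-derivative dominates and the ratio of the two components
   increases.  Both cdfs are mixtures [a1 G1 + a2 G2] of these components, and
   the cross difference of two mixtures factors as
   [(a1 b2 - a2 b1) (G1 y G2 x - G1 x G2 y)], which gives the reversed hazard
   order.  The IRFR alternative is vacuous: an increasing reversed hazard rate
   makes [F] either grow at least linearly or stay flat on [(0, 1]], neither of
   which a cdf with support [[0, +oo)] can do. *)

Lemma Rdiv_le_Rdiv_iff (a b c d : R) :
  0 < b -> 0 < d -> (a / b <= c / d <-> a * d <= c * b).
Proof.
  intros hb hd.
  assert (hbd : 0 < b * d) by nra.
  replace (a * d) with (a / b * (b * d)) by (field; lra).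
  replace (c * b) with (c / d * (b * d)) by (field; lra).
  split; intro H.
  - apply Rmult_le_compat_r; lra.
  - exact (Rmult_le_reg_r _ _ _ hbd H).
Qed.

Lemma derive_nonneg_nondecreasing (g dg : R -> R) (a x y : R) :
  (forall t, a < t -> is_derive g t (dg t)) -> (forall t, a < t -> 0 <= dg t) ->
  a < x -> x <= y -> g x <= g y.
Proof.
  intros Hg Hdg hx hxy.
  destruct (MVT_gen g x y dg) as [c [hc Hc]].
  - intros t ht. rewrite Rmin_left in ht by lra. apply Hg; lra.
  - intros t ht. rewrite Rmin_left in ht by lra.
    apply continuity_pt_filterlim, (ex_derive_continuous g).
    exists (dg t). apply Hg; lra.
  - rewrite Rmin_left in hc by lra.
    pose proof (Hdg c ltac:(lra)). nra.
Qed.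

Lemma ind_gt_cases (x s : R) :
  (s < x /\ ind_gt x s = 1) \/ (x <= s /\ ind_gt x s = 0).
Proof. unfold ind_gt. destruct (Rlt_dec s x); [left | right]; split; lra. Qed.

Definition loc_scale_cdf (F : R -> R) (s l x : R) : R := F ((x - s) / l) * ind_gt x s.

Lemma scaled_arg_pos (s l t : R) : 0 < l -> s < t -> 0 < (t - s) / l.
Proof. intros hl ht. apply Rdiv_lt_0_compat; lra. Qed.

Lemma scaled_arg_le (s1 s2 l1 l2 t : R) :
  0 < l2 -> l2 <= l1 -> s2 <= s1 -> s1 < t -> (t - s1) / l1 <= (t - s2) / l2.
Proof.
  intros hl2 hl hs ht.
  apply Rdiv_le_Rdiv_iff; try lra.
  nra.
Qed.

Section Cdf.

Variables F f : R -> R.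
Hypothesis HF : cont_nonneg_cdf_full_support F.
Hypothesis Hdens : is_density F f.

Lemma cdf_nondecreasing (x y : R) : x <= y -> F x <= F y.
Proof. apply HF. Qed.

Lemma cdf_pos (x : R) : 0 < x -> 0 < F x.
Proof.
  intro hx. destruct HF as (_ & _ & H0 & Hs & _).
  rewrite <- (H0 0) by lra. apply Hs; lra.
Qed.

Lemma cdf_ge0 (x : R) : 0 <= F x.
Proof.
  destruct HF as (_ & _ & H0 & _ & _).
  destruct (Rle_dec x 0) as [hx | hx].
  - rewrite H0; lra.
  - left. apply cdf_pos. lra.
Qed.

Lemma cdf_le1 (x : R) : F x <= 1.
Proof.
  destruct HF as (_ & Hm & _ & _ & Hlim).
  apply Rnot_lt_le. intro hx.
  apply is_lim_spec in Hlim.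
  destruct (Hlim (mkposreal (F x - 1) ltac:(lra))) as [M HM]; simpl in HM.
  set (z := Rmax M x + 1).
  assert (hMz : M < z) by (unfold z; pose proof (Rmax_l M x); lra).
  assert (hxz : x <= z) by (unfold z; pose proof (Rmax_r M x); lra).
  specialize (HM z hMz). apply Rabs_def2 in HM.
  pose proof (Hm x z hxz). lra.
Qed.

Lemma cdf_mean_value (a b : R) :
  0 <= a -> a <= b -> exists c, a <= c <= b /\ F b - F a = f c * (b - a).
Proof.
  intros ha hab.
  destruct (Rle_lt_or_eq_dec a b hab) as [hlt | <-]; [| exists a; split; [lra | ring]].
  destruct (MVT_gen F a b f) as [c [hc Hc]].
  - intros t ht. rewrite Rmin_left in ht by lra. apply Hdens; lra.
  - intros t _. apply continuity_pt_filterlim. apply HF.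
  - rewrite Rmin_left, Rmax_right in hc by lra. exists c. split; assumption.
Qed.

Lemma not_IRFR : ~ IRFR F f.
Proof.
  intro HI. destruct Hdens as [Hf0 _].
  assert (HF1 : 0 < F 1) by (apply cdf_pos; lra).
  assert (Hcross : forall x y, 0 < x -> x <= y -> f x * F y <= f y * F x).
  { intros x y hx hxy. apply Rdiv_le_Rdiv_iff; try (apply cdf_pos; lra). apply HI; lra. }
  destruct (Rle_lt_or_eq_dec 0 (f 1) (Hf0 1)) as [hpos | hzero].
  - set (y := 1 + 2 / f 1).
    assert (hy : 2 / f 1 > 0) by (apply Rdiv_lt_0_compat; lra).
    destruct (cdf_mean_value 1 y) as [c [hc Hc]]; [lra | unfold y; lra |].
    assert (hfc : f 1 <= f c).
    { pose proof (Hcross 1 c ltac:(lra) ltac:(lra)).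
      pose proof (cdf_nondecreasing 1 c ltac:(lra)). pose proof (Hf0 c). nra. }
    assert (Hgrowth : f 1 * (y - 1) = 2) by (unfold y; field; lra).
    pose proof (cdf_le1 y). pose proof (cdf_ge0 1). nra.
  - assert (Hvanish : forall x, 0 < x <= 1 -> f x = 0).
    { intros x hx. pose proof (Hcross x 1 ltac:(lra) ltac:(lra)).
      pose proof (cdf_pos x ltac:(lra)). pose proof (Hf0 x). rewrite <- hzero in *. nra. }
    destruct (cdf_mean_value (1/2) 1) as [c [hc Hc]]; try lra.
    rewrite Hvanish in Hc by lra.
    destruct HF as (_ & _ & _ & Hs & _). pose proof (Hs (1/2) 1 ltac:(lra) ltac:(lra)). lra.
Qed.

Lemma rev_hazard_ge0 (x : R) : 0 < x -> 0 <= rev_hazard F f x.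
Proof.
  intro hx. apply Rdiv_le_0_compat; [apply Hdens | apply cdf_pos; lra].
Qed.

Lemma loc_scale_is_derive (s l t : R) :
  0 < l -> s < t -> is_derive (fun x => F ((x - s) / l)) t (f ((t - s) / l) / l).
Proof.
  intros hl ht.
  replace (f ((t - s) / l) / l) with (/ l * f ((t - s) / l)) by (field; lra).
  apply (is_derive_comp F (fun x => (x - s) / l)).
  - apply (proj2 Hdens), scaled_arg_pos; lra.
  - auto_derive; [exact I | field; lra].
Qed.

Lemma DPRFR_scaled_rev_hazard_le (s1 s2 l1 l2 t : R) :
  DPRFR F f -> 0 < l2 -> l2 <= l1 -> s2 <= s1 -> s1 < t ->
  rev_hazard F f ((t - s2) / l2) / l2 <= rev_hazard F f ((t - s1) / l1) / l1.
Proof.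
  intros HD hl2 hl hs ht.
  pose proof (scaled_arg_pos s1 l1 t ltac:(lra) ht) as hu1.
  pose proof (scaled_arg_le s1 s2 l1 l2 t hl2 hl hs ht) as hu12.
  set (u1 := (t - s1) / l1) in *. set (u2 := (t - s2) / l2) in *.
  (* Since [1 / l = u / (t - s)], both sides are [u * h(u)] divided by [t - s]. *)
  replace (rev_hazard F f u1 / l1) with (u1 * rev_hazard F f u1 / (t - s1))
    by (unfold u1; field; lra).
  replace (rev_hazard F f u2 / l2) with (u2 * rev_hazard F f u2 / (t - s2))
    by (unfold u2; field; lra).
  pose proof (HD u1 u2 hu1 hu12).
  assert (0 <= u2 * rev_hazard F f u2)
    by (apply Rmult_le_pos; [lra | apply rev_hazard_ge0; lra]).
  apply Rdiv_le_Rdiv_iff; nra.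
Qed.

Lemma DPRFR_scaled_cdf_ratio_nondecreasing (s1 s2 l1 l2 x y : R) :
  DPRFR F f -> 0 < l2 -> l2 <= l1 -> s2 <= s1 -> s1 < x -> x <= y ->
  F ((x - s1) / l1) / F ((x - s2) / l2) <= F ((y - s1) / l1) / F ((y - s2) / l2).
Proof.
  intros HD hl2 hl hs hx hxy.
  apply (derive_nonneg_nondecreasing (fun t => F ((t - s1) / l1) / F ((t - s2) / l2))
    (fun t => (f ((t - s1) / l1) / l1 * F ((t - s2) / l2)
               - F ((t - s1) / l1) * (f ((t - s2) / l2) / l2)) / F ((t - s2) / l2) ^ 2) s1);
    [| | exact hx | exact hxy]; intros t ht.
  - apply (is_derive_div (fun t => F ((t - s1) / l1)) (fun t => F ((t - s2) / l2)));
      try (apply loc_scale_is_derive; lra).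
    apply Rgt_not_eq, cdf_pos, scaled_arg_pos; lra.
  - pose proof (cdf_pos _ (scaled_arg_pos s1 l1 t ltac:(lra) ht)) as hF1.
    pose proof (cdf_pos _ (scaled_arg_pos s2 l2 t ltac:(lra) ltac:(lra))) as hF2.
    pose proof (DPRFR_scaled_rev_hazard_le s1 s2 l1 l2 t HD hl2 hl hs ht) as Hh.
    unfold rev_hazard in Hh.
    set (u1 := (t - s1) / l1) in *. set (u2 := (t - s2) / l2) in *.
    replace ((f u1 / l1 * F u2 - F u1 * (f u2 / l2)) / F u2 ^ 2)
      with (F u1 / F u2 * (f u1 / F u1 / l1 - f u2 / F u2 / l2)) by (field; lra).
    apply Rmult_le_pos; [apply Rdiv_le_0_compat |]; lra.
Qed.

Lemma loc_scale_cdf_ge0 (s l x : R) : 0 <= loc_scale_cdf F s l x.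
Proof.
  unfold loc_scale_cdf. pose proof (cdf_ge0 ((x - s) / l)).
  destruct (ind_gt_cases x s) as [[_ ->] | [_ ->]]; lra.
Qed.

Lemma loc_scale_cdf_nondecreasing (s l x y : R) :
  0 < l -> x <= y -> loc_scale_cdf F s l x <= loc_scale_cdf F s l y.
Proof.
  intros hl hxy. unfold loc_scale_cdf.
  destruct (ind_gt_cases x s) as [[hx ->] | [_ ->]].
  - destruct (ind_gt_cases y s) as [[_ ->] | [hy _]]; [| lra].
    rewrite !Rmult_1_r. apply cdf_nondecreasing.
    apply Rdiv_le_Rdiv_iff; nra.
  - rewrite Rmult_0_r. apply loc_scale_cdf_ge0.
Qed.

Lemma DPRFR_loc_scale_cdf_cross_le (s1 s2 l1 l2 x y : R) :
  DPRFR F f -> 0 < l2 -> l2 <= l1 -> s2 <= s1 -> x <= y ->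
  loc_scale_cdf F s1 l1 x * loc_scale_cdf F s2 l2 y
  <= loc_scale_cdf F s1 l1 y * loc_scale_cdf F s2 l2 x.
Proof.
  intros HD hl2 hl hs hxy.
  pose proof (loc_scale_cdf_ge0 s1 l1 y). pose proof (loc_scale_cdf_ge0 s2 l2 x).
  unfold loc_scale_cdf in *.
  destruct (ind_gt_cases x s1) as [[hx ->] | [_ ->]]; [| nra].
  destruct (ind_gt_cases y s1) as [[_ ->] | [hy _]]; [| lra].
  destruct (ind_gt_cases x s2) as [[_ ->] | [hx2 _]]; [| lra].
  destruct (ind_gt_cases y s2) as [[_ ->] | [hy2 _]]; [| lra].
  rewrite !Rmult_1_r.
  apply Rdiv_le_Rdiv_iff; try (apply cdf_pos, scaled_arg_pos; lra).
  exact (DPRFR_scaled_cdf_ratio_nondecreasing s1 s2 l1 l2 x y HD hl2 hl hs hx hxy).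
Qed.

End Cdf.

Lemma rh_ge_mixture (G1 G2 FX FY : R -> R) (a1 a2 b1 b2 : R) :
  (forall x, 0 <= G1 x) -> (forall x, 0 <= G2 x) ->
  (forall x y, x <= y -> G1 x <= G1 y) -> (forall x y, x <= y -> G2 x <= G2 y) ->
  (forall x y, x <= y -> G1 x * G2 y <= G1 y * G2 x) ->
  0 <= b1 -> 0 <= b2 -> a2 * b1 <= a1 * b2 ->
  (forall x, FX x = a1 * G1 x + a2 * G2 x) -> (forall x, FY x = b1 * G1 x + b2 * G2 x) ->
  rh_ge FX FY.
Proof.
  intros G1ge0 G2ge0 G1mono G2mono Gcross hb1 hb2 hab EX EY x y _ hxy hFYx.
  assert (hFY : FY x <= FY y).
  { rewrite !EY. pose proof (G1mono x y hxy). pose proof (G2mono x y hxy). nra. }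
  apply Rdiv_le_Rdiv_iff; [lra | lra |].
  assert (Hid : FY y * FX x - FY x * FX y
                = (a1 * b2 - a2 * b1) * (G1 x * G2 y - G1 y * G2 x)).
  { rewrite !EX, !EY. ring. }
  pose proof (Gcross x y hxy). nra.
Qed.

Lemma nat_cross_coef_le (n1 n2 m1 m2 : nat) (r1 r2 : R) :
  0 <= r1 -> 0 <= r2 -> (m1 * n2 <= n1 * m2)%nat ->
  INR n2 * r2 * (INR m1 * r1) <= INR n1 * r1 * (INR m2 * r2).
Proof.
  intros hr1 hr2 Hnm.
  apply le_INR in Hnm. rewrite !mult_INR in Hnm.
  replace (INR n2 * r2 * (INR m1 * r1)) with (r1 * r2 * (INR m1 * INR n2)) by ring.
  replace (INR n1 * r1 * (INR m2 * r2)) with (r1 * r2 * (INR n1 * INR m2)) by ring.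
  apply Rmult_le_compat_l; [apply Rmult_le_pos |]; assumption.
Qed.

Theorem theorem4p4 (F f : R -> R) (s1 s2 l1 l2 r1 r2 : R) (n1 n2 m1 m2 : nat) :
  cont_nonneg_cdf_full_support F ->
  is_density F f ->
  0 <= s1 -> 0 <= s2 -> 0 < l1 -> 0 < l2 -> 0 <= r1 -> 0 <= r2 ->
  (0 < n1)%nat -> (0 < n2)%nat -> (0 < m1)%nat -> (0 < m2)%nat ->
  INR n1 * r1 + INR n2 * r2 = 1 ->
  INR m1 * r1 + INR m2 * r2 = 1 ->
  ((DPRFR F f /\ D2plus l1 l2 /\ D2plus s1 s2) \/
   (IRFR F f /\ E2plus l1 l2 /\ E2plus s1 s2)) ->
  (m1 * n2 <= n1 * m2)%nat ->
  rh_ge (mix_cdf F (INR n1 * r1) (INR n2 * r2) s1 s2 l1 l2)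
        (mix_cdf F (INR m1 * r1) (INR m2 * r2) s1 s2 l1 l2).
Proof.
  intros HF Hdens _ _ hl1 hl2 hr1 hr2 _ _ _ _ _ _ Hcase Hnm.
  destruct Hcase as [[HD [[hl _] [hs _]]] | [HI _]];
    [| exfalso; exact (not_IRFR F f HF Hdens HI)].
  apply (rh_ge_mixture (loc_scale_cdf F s1 l1) (loc_scale_cdf F s2 l2)
           _ _ (INR n1 * r1) (INR n2 * r2) (INR m1 * r1) (INR m2 * r2)).
  - apply loc_scale_cdf_ge0, HF.
  - apply loc_scale_cdf_ge0, HF.
  - intros x y. apply loc_scale_cdf_nondecreasing; assumption.
  - intros x y. apply loc_scale_cdf_nondecreasing; assumption.
  - intros x y. apply (DPRFR_loc_scale_cdf_cross_le F f HF Hdens); auto; lra.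
  - apply Rmult_le_pos; [apply pos_INR | exact hr1].
  - apply Rmult_le_pos; [apply pos_INR | exact hr2].
  - exact (nat_cross_coef_le n1 n2 m1 m2 r1 r2 hr1 hr2 Hnm).
  - intro x. unfold mix_cdf, loc_scale_cdf. ring.
  - intro x. unfold mix_cdf, loc_scale_cdf. ring.
Qed.
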